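(* In the ternary soft heap with threshold $r_0=\max(2,\lceil\lg(1/\epsilon)\rceil)$, for every item $e$ stored at a node of rank $r$, $|C(e)|\le c_r$ where $c_r=0$ for $r\le r_0$ and $c_r=2^{r-r_0}-1$ for $r>r_0$.
   Context: Ternary soft heap with error parameter $0<\epsilon<1$ and threshold $r_0=\max(2,\lceil\lg(1/\epsilon)\rceil)$ ($\lg$ = binary logarithm). Items are (key, value) pairs with distinct keys from a totally ordered universe. A rank-$r$ tree is a perfectly balanced rooted tree in which every internal node has exactly $3$ children and all $3^r$ leaves are at depth $r$; a node whose subtree has height $r$ has rank $r$. Each leaf corresponds to a distinct insertion. Each node holds at most one item (it may be empty); the tree is heap-ordered (an item's key is at most the keys of items at descendants). Each item $e$ held at a node carries a corruption-set $C(e)$ (empty when inserted). The heap is a list of trees in nondecreasing rank order, with at most $2$ trees of each rank, together with suffix-min references to roots. \textsf{insert}$(e)$: add a rank-$0$ tree holding $e$ at the front; while the first three trees have equal rank $r$, link them: create a new node of rank $r+1$ with the three roots as children and fill it. Filling an empty node $v$ of rank $r$: a single pull moves to $v$ the minimum-key item among $v$'s children and then recursively fills the child it came from (a node whose subtree holds no items stays empty). If $r\le r_0$, $v$ is filled by one pull; if $r>r_0$, two items $e_1,e_2$ with $\mathrm{key}(e_1)\le\mathrm{key}(e_2)$ are pulled up successively, $e_1$ and all of $C(e_1)$ are added to $C(e_2)$ ($e_1$ becomes corrupted), and $e_2$ is stored at $v$ (if only one item is available, it is stored). \textsf{extract-min}: let $e$ be the minimum-key item among roots; if $C(e)\neq\emptyset$,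 remove and return an item of $C(e)$ with current key $\mathrm{key}(e)$; otherwise remove $e$, refill its root, update suffix-min references, and return $e$ with the corruptions created. Corrupted items are exactly those in corruption-sets; an item in $C(e')$ has current key $\mathrm{key}(e')$. *)

From HB Require Import structures.
From mathcomp Require Import all_boot all_order all_algebra.
From mathcomp Require Import reals exp.
From Stdlib Require List.
Set Implicit Arguments. Unset Strict Implicit. Unset Printing Implicit Defensive.
Import Order.TTheory GRing.Theory Num.Theory.

Definition r0_of (R : realType) (eps : R) : nat :=
  maxn 2 `|Num.ceil (ln (eps^-1) / ln 2)|%N.

Definition c_bound (r0 r : nat) : nat :=
  if r <= r0 then 0 else 2 ^ (r - r0) - 1.

Section SoftHeap.
Context {disp : Order.disp_t} {K : orderType disp} {V : Type}.
Local Open Scope order_scope.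

Definition item := (K * V)%type.
(* an item held at a node together with its corruption-set C(e) *)
Definition cell := (item * seq item)%type.
Definition ckey (x : cell) : K := x.1.1.

Inductive tree :=
| Leaf of option cell
| Node3 of option cell & tree & tree & tree.

(* rank of a node = height of its subtree *)
Fixpoint height (t : tree) : nat :=
  match t with
  | Leaf _ => 0
  | Node3 _ a b c => (maxn (height a) (maxn (height b) (height c))).+1
  end.

Definition root (t : tree) : option cell :=
  match t with Leaf o => o | Node3 o _ _ _ => o end.

Definition set_root (o : option cell) (t : tree) : tree :=
  match t with Leaf _ => Leaf o | Node3 _ a b c => Node3 o a b c end.

Definition le_opt (x y : option cell) : bool :=
  match x, y with
  | Some x, Some y => ckey x <= ckey y
  | Some _, None => true
  | None, _ => false
  end.

Definition pull (f : tree -> tree) (a b c : tree)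
  : option cell * (tree * tree * tree) :=
  if le_opt (root a) (root b) && le_opt (root a) (root c) then
    (root a, (f a, b, c))
  else if le_opt (root b) (root c) then (root b, (a, f b, c))
  else if root c is Some _ then (root c, (a, b, f c))
  else (None, (a, b, c)).

Definition combine (o1 o2 : option cell) : option cell :=
  match o1, o2 with
  | Some x, Some y =>
      let lo := if ckey x <= ckey y then x else y in
      let hi := if ckey x <= ckey y then y else x in
      Some (hi.1, lo.1 :: lo.2 ++ hi.2)
  | Some x, None => Some x
  | None, Some y => Some y
  | None, None => None
  end.

(* Filling the (emptied) root of t; n is fuel (>= height t suffices and
   never runs out, since children have smaller height and fill preserves
   the shape). *)
Fixpoint refill_f (r0 n : nat) (t : tree) {struct n} : tree :=
  match t with
  | Leaf _ => Leaf None
  | Node3 _ a b c =>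
    match n with
    | 0 => Node3 None a b c
    | n'.+1 =>
      let f := refill_f r0 n' in
      let '(o1, (a1, b1, c1)) := pull f a b c in
      if height t <= r0 then Node3 o1 a1 b1 c1
      else let '(o2, (a2, b2, c2)) := pull f a1 b1 c1 in
           Node3 (combine o1 o2) a2 b2 c2
    end
  end.

Definition refill (r0 : nat) (t : tree) : tree := refill_f r0 (height t) t.

(* the heap: list of trees (front first, nondecreasing ranks) *)
Definition heap := seq tree.

Fixpoint link_loop (r0 n : nat) (ts : heap) : heap :=
  match n with
  | 0 => ts
  | n'.+1 =>
    match ts with
    | t1 :: t2 :: t3 :: rest =>
        if (height t1 == height t2) && (height t2 == height t3) then
          link_loop r0 n' (refill r0 (Node3 None t1 t2 t3) :: rest)
        else ts
    | _ => ts
    end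
  end.

Definition insert (r0 : nat) (e : item) (ts : heap) : heap :=
  let ts' := Leaf (Some (e, [::])) :: ts in link_loop r0 (size ts') ts'.

Definition is_min_root (ts : heap) (k : K) : bool :=
  all (fun t => if root t is Some c then k <= ckey c else true) ts.

(* extract-min (the choice of the returned item of C(e) is arbitrary) *)
Inductive extract_step (r0 : nat) : heap -> heap -> Prop :=
| ext_corrupt ts1 t ts2 e C1 x C2 :
    root t = Some (e, C1 ++ x :: C2) ->
    is_min_root (ts1 ++ t :: ts2) e.1 ->
    extract_step r0 (ts1 ++ t :: ts2)
                    (ts1 ++ set_root (Some (e, C1 ++ C2)) t :: ts2)
| ext_remove ts1 t ts2 e :
    root t = Some (e, [::]) ->
    is_min_root (ts1 ++ t :: ts2) e.1 ->
    extract_step r0 (ts1 ++ t :: ts2) (ts1 ++ refill r0 t :: ts2).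

Inductive reachable (r0 : nat) : seq item -> heap -> Prop :=
| reach_init : reachable r0 [::] [::]
| reach_insert ins h (e : item) :
    reachable r0 ins h -> e.1 \notin map fst ins ->
    reachable r0 (e :: ins) (insert r0 e h)
| reach_extract ins h h' :
    reachable r0 ins h -> extract_step r0 h h' -> reachable r0 ins h'.

Inductive stored_at : tree -> nat -> item -> seq item -> Prop :=
| st_here t e C : root t = Some (e, C) -> stored_at t (height t) e C
| st_a o a b c r e C : stored_at a r e C -> stored_at (Node3 o a b c) r e C
| st_b o a b c r e C : stored_at b r e C -> stored_at (Node3 o a b c) r e C
| st_c o a b c r e C : stored_at c r e C -> stored_at (Node3 o a b c) r e C.

End SoftHeap.

From Pilot Require Import Defs.
From HB Require Import structures.
From mathcomp Require Import all_boot all_order all_algebra.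
From mathcomp Require Import reals exp.
From Stdlib Require List.
From mathcomp Require Import zify.
Set Implicit Arguments. Unset Strict Implicit.
Import Order.TTheory GRing.Theory Num.Theory.

(* Call a tree *well-bounded* if every item held at a node of rank r has a
   corruption-set of size at most c_r.  The bound c_r is monotone in r and
   satisfies 2 c_r + 1 <= c_(r+1) above the threshold r0.  Filling a node of
   rank r pulls up items from children of rank < r, hence each pulled item is
   within c_(r-1) <= c_r; below the threshold one pull is stored, above it two
   pulled items are merged into a set of size <= 2 c_(r-1) + 1 <= c_r. *)

Section Bound.
Variable r0 : nat.
Local Notation cb := (c_bound r0).

Lemma c_boundE r : cb r = 2 ^ (r - r0) - 1.
Proof. by rewrite /c_bound; case: ifP => // /eqP ->. Qed.

Lemma c_bound_mono m n : m <= n -> cb m <= cb n.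
Proof.
by move=> le_mn; rewrite !c_boundE leq_sub2r // leq_pexp2l // leq_sub2r.
Qed.

(* Above the threshold, merging two sets of bound c_r and one extra item
   stays within c_(r+1). *)
Lemma c_bound_double r : r0 < r.+1 -> (cb r).*2.+1 <= cb r.+1.
Proof.
rewrite ltnS => le_r0r; rewrite !c_boundE subSn // expnS.
have : 0 < 2 ^ (r - r0) by rewrite expn_gt0.
lia.
Qed.

End Bound.

Section Invariant.
Context {disp : Order.disp_t} {K : orderType disp} {V : Type}.
Variable r0 : nat.
Local Notation T := (@tree disp K V).
Local Notation cb := (c_bound r0).

Definition bounded (k : nat) (o : option (@cell disp K V)) : Prop :=
  if o is Some x then size x.2 <= k else True.

Lemma bounded_mono k k' o : k <= k' -> bounded k o -> bounded k' o.
Proof. by case: o => //= x le_kk' le_xk; apply: leq_trans le_kk'. Qed.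

Fixpoint well_bounded (t : T) : Prop :=
  match t with
  | Leaf o => bounded (cb 0) o
  | Node3 o a b c =>
      [/\ bounded (cb (height t)) o, well_bounded a, well_bounded b
        & well_bounded c]
  end.

Definition children_bounded (t : T) : Prop :=
  if t is Node3 _ a b c then [/\ well_bounded a, well_bounded b & well_bounded c]
  else True.

Lemma well_bounded_children t : well_bounded t -> children_bounded t.
Proof. by case: t => [o|o a b c] //= []. Qed.

Lemma root_bounded t r :
  well_bounded t -> height t <= r -> bounded (cb r) (Defs.root t).
Proof.
move=> wt le_tr; apply: bounded_mono (c_bound_mono r0 le_tr) _.
by case: t wt {le_tr} => [o|o a b c] //= [].
Qed.

Lemma well_bounded_shrink_root t e C C' :
  well_bounded t -> Defs.root t = Some (e, C) -> size C' <= size C ->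
  well_bounded (set_root (Some (e, C')) t).
Proof.
case: t => [o|o a b c] /= wt rt le_CC'; move: wt; rewrite rt /=.
  exact: leq_trans.
by move=> [le_C wa wb wc]; split => //; apply: leq_trans le_C.
Qed.

Lemma combine_bounded k o1 o2 :
  bounded k o1 -> bounded k o2 -> bounded k.*2.+1 (combine o1 o2).
Proof.
case: o1 => [x|]; case: o2 => [y|] //=; try lia.
by move=> kx ky; case: ifP => _ /=; rewrite size_cat; lia.
Qed.

Section Pull.
Variable f : T -> T.
Hypothesis f_inv : forall t, well_bounded t ->
  well_bounded (f t) /\ height (f t) = height t.

Lemma pull_bounded a b c k :
  well_bounded a -> well_bounded b -> well_bounded c ->
  bounded k (Defs.root a) -> bounded k (Defs.root b) -> bounded k (Defs.root c) ->
  let: (o, (a', b', c')) := pull f a b c in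
  [/\ bounded k o, [/\ well_bounded a', well_bounded b' & well_bounded c']
    & [/\ height a' = height a, height b' = height b & height c' = height c]].
Proof.
move=> wa wb wc ka kb kc; rewrite /pull.
case: ifP => _; first by case: (f_inv wa) => wa' ->.
case: ifP => _; first by case: (f_inv wb) => wb' ->.
by case: (Defs.root c) kc => [x|] kc //=; case: (f_inv wc) => wc' ->.
Qed.

End Pull.

(* Refilling the root keeps the tree well-bounded and preserves its height:
   one pull is bounded by c_(r-1) <= c_r, two merged pulls by
   2 c_(r-1) + 1 <= c_r (rank r above the threshold). *)
Lemma refill_f_inv n t : children_bounded t ->
  well_bounded (refill_f r0 n t) /\ height (refill_f r0 n t) = height t.
Proof.
elim: n t => [|n IH] [o|o a b c] //= [wa wb wc]; first by [].
have f_inv t : well_bounded t ->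
    well_bounded (refill_f r0 n t) /\ height (refill_f r0 n t) = height t.
  by move=> wt; apply: IH; apply: well_bounded_children.
set r := maxn (height a) (maxn (height b) (height c)).
have [ha hb hc] : [/\ height a <= r, height b <= r & height c <= r].
  by rewrite /r; split; lia.
have := pull_bounded f_inv wa wb wc (root_bounded wa ha) (root_bounded wb hb)
  (root_bounded wc hc).
case: (pull _ a b c) => o1 [[a1 b1] c1] [k1 [wa1 wb1 wc1] [ha1 hb1 hc1]].
case: ifP => below.
  rewrite /= ha1 hb1 hc1 -/r; split => //; split => //.
  exact: bounded_mono (c_bound_mono r0 (leqnSn r)) k1.
have [ha1' hb1' hc1'] : [/\ height a1 <= r, height b1 <= r & height c1 <= r].
  by rewrite ha1 hb1 hc1.
have := pull_bounded f_inv wa1 wb1 wc1 (root_bounded wa1 ha1')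
  (root_bounded wb1 hb1') (root_bounded wc1 hc1').
case: (pull _ a1 b1 c1) => o2 [[a2 b2] c2] [k2 [wa2 wb2 wc2] [ha2 hb2 hc2]].
rewrite /= ha2 hb2 hc2 ha1 hb1 hc1 -/r; split => //; split => //.
apply: bounded_mono (combine_bounded k1 k2).
by apply: c_bound_double; rewrite ltnNge; apply: negbT below.
Qed.

Lemma refill_bounded t : children_bounded t -> well_bounded (refill r0 t).
Proof. by move=> ct; case: (refill_f_inv (height t) ct). Qed.

Definition heap_bounded (h : seq T) : Prop :=
  forall t, List.In t h -> well_bounded t.

Lemma heap_bounded_mid ts1 t ts2 :
  heap_bounded (ts1 ++ t :: ts2) -> well_bounded t.
Proof. by move=> hb; apply: hb; apply/List.in_app_iff; right; left. Qed.

Lemma heap_bounded_replace ts1 t t' ts2 :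
  heap_bounded (ts1 ++ t :: ts2) -> well_bounded t' ->
  heap_bounded (ts1 ++ t' :: ts2).
Proof.
move=> hb wt' u /List.in_app_iff [u_in|/= [<-|u_in]] //.
  by apply: hb; apply/List.in_app_iff; left.
by apply: hb; apply/List.in_app_iff; right; right.
Qed.

Lemma link_loop_bounded n ts : heap_bounded ts -> heap_bounded (link_loop r0 n ts).
Proof.
elim: n ts => [|n IH] [|t1 [|t2 [|t3 ts]]] //= hb.
case: ifP => _ //; apply: IH => u /= [<-|u_in]; last by apply: hb; right; right; right.
by apply: refill_bounded; split; apply: hb; [left|right; left|right; right; left].
Qed.

Lemma insert_bounded e h : heap_bounded h -> heap_bounded (insert r0 e h).
Proof. by move=> hb; apply: link_loop_bounded => t /= [<-|/hb]. Qed.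

Lemma extract_bounded h h' :
  extract_step r0 h h' -> heap_bounded h -> heap_bounded h'.
Proof.
case=> [ts1 t ts2 e C1 x C2 rt _|ts1 t ts2 e rt _] hb;
  apply: (heap_bounded_replace hb); have wt := heap_bounded_mid hb.
  by apply: (well_bounded_shrink_root wt rt); rewrite !size_cat /= leq_add2l.
exact/refill_bounded/well_bounded_children.
Qed.

Lemma reachable_bounded ins h : reachable r0 ins h -> heap_bounded h.
Proof.
elim=> [|{}ins {}h e _ hb _|{}ins {}h h' _ hb step] //.
  exact: insert_bounded.
exact: extract_bounded step hb.
Qed.

Lemma stored_at_bounded t r e C :
  well_bounded t -> stored_at t r e C -> size C <= cb r.
Proof.
move=> + st; elim: st => {t r e C} [t e C rt wt|o a b c r e C _ IH [_ wa _ _]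
  |o a b c r e C _ IH [_ _ wb _]|o a b c r e C _ IH [_ _ _ wc]]; try exact: IH.
by have := root_bounded wt (leqnn _); rewrite rt.
Qed.

End Invariant.

Theorem mainTheorem10 (R : realType) (eps : R)
  (disp : Order.disp_t) (K : orderType disp) (V : Type) :
  (0 < eps < 1)%R ->
  forall (ins : seq (@item _ K V)) (h : heap),
    reachable (r0_of eps) ins h ->
    forall t, List.In t h ->
    forall (r : nat) (e : item) (C : seq item),
      stored_at t r e C -> size C <= c_bound (r0_of eps) r.
Proof.
move=> _ ins h reach t t_in r e C st.
exact: stored_at_bounded (reachable_bounded reach t_in) st.
Qed.
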